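(* Let $v\in[2,m-1]$ and let $G\in\binom{[m]\setminus\{v\}}{2d-1}$ with $G=F\cap F'$, where $F$ is an upper facet of $C(m,2d+1)\backslash v$ and $F'$ is a lower facet of $C(m,2d+1)\backslash v$. Then $G$ is a facet of $C([m]\setminus\{v\},2d-1)$.
   Context: For a finite ordered set $V$, an $n$-subset $F\subseteq V$ is a facet of the cyclic polytope $C(V,n)$ iff either every $w\in V\setminus F$ has an even number of elements of $F$ above it, or every such $w$ has an odd number (Gale's evenness criterion). Every facet of $C(m,2d+1)$ is uniquely a disjoint union of pairs $\{i,i+1\}$ of consecutive integers together with exactly one of $1$ or $m$. For $v\in[2,m-1]$, the facets of the vertex figure $C(m,2d+1)\backslash v$ are the sets $F\subseteq[m]\setminus\{v\}$ such that $F\cup\{v\}$ is a facet of $C(m,2d+1)$; $F$ is a lower facet of $C(m,2d+1)\backslash v$ if in this decomposition of $F\cup\{v\}$ the element $v$ is paired with $v+1$, and an upper facet if $v$ is paired with $v-1$. *)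

From mathcomp Require Import all_boot.
From mathcomp Require Import finmap.
Set Implicit Arguments. Unset Strict Implicit. Unset Printing Implicit Defensive.
Local Open Scope fset_scope.

Definition interval_m (m : nat) : {fset nat} := [fset i | i in iota 1 m].

(* Gale's evenness criterion: F is a facet of the cyclic polytope C(V,n),
   V a finite ordered set (here a finite set of naturals with the usual order). *)
Definition is_facet_cyc (V : {fset nat}) (n : nat) (F : {fset nat}) : Prop :=
  F `<=` V /\ #|` F | = n /\
  ((forall w, w \in V -> w \notin F -> ~~ odd #|` [fset x in F | w < x] |) \/
   (forall w, w \in V -> w \notin F -> odd #|` [fset x in F | w < x] |)).

Definition pair_decomp (m : nat) (F P : {fset nat}) (e : nat) : Prop :=
  (e = 1 \/ e = m) /\
  F = e |` (P `|` [fset i.+1 | i in P]) /\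
  (forall i j, i \in P -> j \in P -> i.+1 != j) /\
  e \notin P /\ e \notin [fset i.+1 | i in P].

Definition vfig_facet (m d v : nat) (F : {fset nat}) : Prop :=
  F `<=` interval_m m `\ v /\ is_facet_cyc (interval_m m) (2 * d + 1) (v |` F).

(* lower facet: in the decomposition of F u {v}, v is paired with v+1 *)
Definition lower_facet (m d v : nat) (F : {fset nat}) : Prop :=
  vfig_facet m d v F /\
  exists P e, pair_decomp m (v |` F) P e /\ v \in P.

(* upper facet: in the decomposition of F u {v}, v is paired with v-1 *)
Definition upper_facet (m d v : nat) (F : {fset nat}) : Prop :=
  vfig_facet m d v F /\
  exists P e, pair_decomp m (v |` F) P e /\ 1 <= v.-1 /\ v.-1 \in P.

From mathcomp Require Import all_boot finmap zify.
From Stdlib Require Import Lia.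
Set Implicit Arguments.
Unset Strict Implicit.
Unset Printing Implicit Defensive.

(* Splitting a facet of C(m,2d+1) into its endpoint e and its pairs {i,i+1},
   only a pair straddling t contributes an odd number of elements above t.
   Hence, for t in [m] outside F, the parity of [card_above F t] is
   (e = m) + [t < v] when F is an upper facet of the vertex figure, and
   (e = m) + [t <= v] when it is a lower one.  Write F = G + a, F' = G + b.
   Comparing the two formulas at v and at another non-element w of G shows
   that exactly one of v, w lies between a and b.  Of the three ways to split
   four points of a line into two pairs exactly one is interleaving, so w and
   b lie on the same side of {v, a}: this says that G has the same parity at
   w as at b. *)

Local Open Scope fset_scope.

Definition card_above (S : {fset nat}) (t : nat) : nat := #|` [fset x in S | t < x] |.

Lemma card_above_fsetU1 (x : nat) (S : {fset nat}) t : x \notin S ->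
  card_above (x |` S) t = ((t < x) + card_above S t)%N.
Proof.
move=> xS; rewrite /card_above.
have -> : [fset y in x |` S | t < y] =
          (if t < x then x |` [fset y in S | t < y] else [fset y in S | t < y]).
  apply/fsetP => y; case: ifP => tx; rewrite !inE;
    by case: eqVneq => [->|_]; rewrite ?tx ?andbF.
by case: ifP => // _; rewrite cardfsU1 !inE (negPf xS).
Qed.

Lemma odd_card_above_fsetU1 (x : nat) (S : {fset nat}) t : x \notin S ->
  odd (card_above (x |` S) t) = (t < x) (+) odd (card_above S t).
Proof. by move=> xS; rewrite card_above_fsetU1 // oddD oddb. Qed.

Lemma card_above_fsetU (A B : {fset nat}) t : [disjoint A & B] ->
  card_above (A `|` B) t = (card_above A t + card_above B t)%N.
Proof.
move=> /fdisjointP AB; rewrite /card_above.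
have -> : [fset y in A `|` B | t < y] = [fset y in A | t < y] `|` [fset y in B | t < y].
  by apply/fsetP => y; rewrite !inE andb_orl.
rewrite cardfsU.
suff -> : [fset y in A | t < y] `&` [fset y in B | t < y] = fset0 by rewrite cardfs0 subn0.
apply/fsetP => y; rewrite !inE andbACA.
by case yA: (y \in A); rewrite //= (negPf (AB y yA)).
Qed.

Lemma card_above_succ (P : {fset nat}) t :
  card_above [fset i.+1 | i in P] t = (card_above P t + (t \in P))%N.
Proof.
rewrite /card_above.
have -> : [fset x in [fset i.+1 | i in P] | t < x] =
          [fset i.+1 | i in [fset i in P | t <= i]].
  apply/fsetP => y; rewrite inE; apply/andP/imfsetP => /=.
    by move=> [/imfsetP [i iP ->] ti]; exists i; rewrite // !inE iP.
  by move=> [i]; rewrite !inE => /andP [iP ti] ->; split => //; apply/imfsetP; exists i.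
rewrite card_imfset /=; last exact: succn_inj.
have -> : [fset i in P | t <= i] =
          (if t \in P then t |` [fset i in P | t < i] else [fset i in P | t < i]).
  apply/fsetP => i; case: ifP => tP; rewrite !inE leq_eqVlt eq_sym;
    by case: eqVneq => [->|_]; rewrite ?tP.
by case: ifP => _; rewrite ?addn0 // cardfsU1 !inE ltnn andbF addnC.
Qed.

(* For [t] distinct from [x] and [y]: [t] lies strictly between them. *)
Definition between (x y t : nat) : bool := (t < x) (+) (t < y).

Lemma between_middle x y z : uniq [:: x; y; z] ->
  between y z x (+) between z x y (+) between x y z.
Proof.
rewrite /between /= !inE !negb_or => /and3P[/andP[/negPf xy /negPf xz] /negPf yz _].
case: (ltngtP x y) xy => // ? _; case: (ltngtP x z) xz => // ? _;
  case: (ltngtP y z) yz => // ? _; lia.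
Qed.

Lemma between_interleave a b v w : uniq [:: a; b; v; w] ->
  between a b v != between a b w -> between v a w = between v a b.
Proof.
rewrite /between /= !inE !negb_or andbT.
move=> /and3P[/and3P[/negPf ab /negPf av /negPf aw] /andP[/negPf bv /negPf bw] /negPf vw].
case: (ltngtP a b) ab => // ? _; case: (ltngtP a v) av => // ? _;
  case: (ltngtP a w) aw => // ? _; case: (ltngtP b v) bv => // ? _;
  case: (ltngtP b w) bw => // ? _; case: (ltngtP v w) vw => // ? _; lia.
Qed.

Lemma parity_meet_constant (p : nat -> bool) (X : pred nat) (a b v : nat) (q q' : bool) :
  uniq [:: a; b; v] -> b \in X -> v \in X ->
  (forall t, t \in X -> t != a -> (t < a) (+) p t = q (+) (t < v)) ->
  (forall t, t \in X -> t != b -> (t < b) (+) p t = q' (+) (t <= v)) ->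
  {in X, forall w, w != v -> p w = p b}.
Proof.
move=> abv bX vX hA hB.
have [ab av bv] : [/\ a != b, a != v & b != v].
  by move: abv; rewrite /= !inE !negb_or => /and3P[/andP[]].
have pA t : t \in X -> t != a -> p t = q (+) between v a t.
  by move=> tX ta; rewrite -[p t](addKb (t < a)) hA // addbC -addbA.
have pB t : t \in X -> t != b -> t != v -> p t = q' (+) between b v t.
  move=> tX tb tv; rewrite -[p t](addKb (t < b)) hB // [t <= v]leq_eqVlt (negPf tv).
  by rewrite /= addbCA.
have bet_v : between a b v = ~~ (q (+) q').
  have [va vb] : v != a /\ v != b by rewrite !(eq_sym v).
  move: (pA v vX va) (hB v vX vb); rewrite /between ltnn leqnn => ->.
  by case: (q) (q') (v < a) (v < b) => [] [] [] [].
have pb : p b = q (+) between v a b by rewrite pA // eq_sym.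
move=> w; have [-> // | wb] := eqVneq w b.
have [-> aX _ | wa wX wv] := eqVneq w a.
  rewrite (pB a) // pb; move: (between_middle abv); rewrite bet_v.
  by case: (q) (q') (between b v a) (between v a b) => [] [] [] [].
have abvw : uniq [:: a; b; v; w].
  by rewrite /= !inE !negb_or ab av bv !(eq_sym _ w) wa wb wv.
have cross : between a b v != between a b w.
  move: (pA w wX wa); rewrite bet_v (pB w wX wb wv) /between.
  by case: (q) (q') (w < v) (w < a) (w < b) => [] [] [] [] [].
by rewrite pA // pb (between_interleave abvw cross).
Qed.

Lemma gale_parity_meet (V G : {fset nat}) a b v q q' :
  a != b -> a \notin G -> b \notin G -> v \notin a |` G -> v \notin b |` G ->
  b \in V -> v \in V ->
  (forall t, t \in V -> t \notin a |` G -> odd (card_above (a |` G) t) = q (+) (t < v)) ->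
  (forall t, t \in V -> t \notin b |` G -> odd (card_above (b |` G) t) = q' (+) (t <= v)) ->
  {in V, forall w, w \notin G -> w != v -> odd (card_above G w) = odd (card_above G b)}.
Proof.
move=> ab aG bG vaG vbG bV vV hA hB w wV wG.
have [av vG] : a != v /\ v \notin G by move: vaG; rewrite !inE negb_or eq_sym => /andP[].
have bv : b != v by move: vbG; rewrite !inE negb_or eq_sym => /andP[].
pose X := [pred t | (t \in V) && (t \notin G)].
have abv : uniq [:: a; b; v] by rewrite /= !inE !negb_or ab av bv.
have hA' t : t \in X -> t != a -> (t < a) (+) odd (card_above G t) = q (+) (t < v).
  by move=> /andP [tV tG] ta; rewrite -odd_card_above_fsetU1 // hA // !inE negb_or ta.
have hB' t : t \in X -> t != b -> (t < b) (+) odd (card_above G t) = q' (+) (t <= v).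
  by move=> /andP [tV tG] tb; rewrite -odd_card_above_fsetU1 // hB // !inE negb_or tb.
by apply: (parity_meet_constant abv _ _ hA' hB'); rewrite inE ?bV ?vV ?wV ?bG ?vG.
Qed.

Lemma fsetU1_of_card (K : choiceType) (G F : {fset K}) :
  G `<=` F -> #|` F| = #|` G|.+1 -> exists2 a, a \notin G & F = a |` G.
Proof.
move=> GF cF; have /cardfs1P [a Fa] : #|` F `\` G| == 1%N by rewrite cardfsDS // cF subSnn.
have : a \in F `\` G by rewrite Fa inE.
rewrite inE => /andP [aG _]; exists a => //.
by rewrite -(fsetID G F) Fa (fsetIidPr GF) fsetUC.
Qed.

Lemma mem_interval_m m t : (t \in interval_m m) = (0 < t <= m).
Proof. by rewrite /interval_m inE /= mem_iota add1n ltnS. Qed.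

Lemma pair_decomp_sub m (H P : {fset nat}) e : pair_decomp m H P e -> e \in H /\ P `<=` H.
Proof.
move=> [_ [-> _]]; split; first by rewrite !inE eqxx.
by apply/fsubsetP => i iP; rewrite !inE iP orbT.
Qed.

Lemma odd_card_above_pair_decomp m (H P : {fset nat}) e t : pair_decomp m H P e ->
  odd (card_above H t) = (t < e) (+) (t \in P).
Proof.
move=> [_ [-> [Pdisj [eP eP1]]]].
have P_P1 : [disjoint P & [fset i.+1 | i in P]].
  apply/fdisjointP => i iP; apply/imfsetP => -[j jP ij].
  by move: (Pdisj j i jP iP); rewrite ij eqxx.
rewrite card_above_fsetU1 ?inE ?negb_or ?eP //.
by rewrite card_above_fsetU // card_above_succ !oddD addKb !oddb.
Qed.

Lemma odd_card_above_facet m (H P : {fset nat}) e t : pair_decomp m H P e ->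
  t \in interval_m m -> t != e -> odd (card_above H t) = (e == m) (+) (t \in P).
Proof.
move=> dec; rewrite (odd_card_above_pair_decomp t dec) mem_interval_m.
by case: dec => [[] -> _] /andP [t0 tm] te; congr (_ (+) _); lia.
Qed.

Lemma vfig_facet_notin m d v (F : {fset nat}) : vfig_facet m d v F -> v \notin F.
Proof. by move=> [/fsubsetP FV _]; apply/negP => /FV; rewrite !inE eqxx. Qed.

Lemma vfig_facet_card m d v (F : {fset nat}) : vfig_facet m d v F -> #|` F| = (2 * d)%N.
Proof.
move=> vfF; have [_ [_ [+ _]]] := vfF.
by rewrite cardfsU1 (vfig_facet_notin vfF) /=; lia.
Qed.

Lemma vfig_facet_fsetU1 m d v (F G : {fset nat}) : 0 < d -> vfig_facet m d v F ->
  G `<=` F -> #|` G| = (2 * d).-1 -> exists2 a, a \notin G & F = a |` G.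
Proof.
move=> d0 vfF GF cG; apply: fsetU1_of_card => //.
by rewrite (vfig_facet_card vfF) cG; lia.
Qed.

Section VertexFigure.

Variables m d v : nat.
Hypothesis v_inner : 1 < v < m.

Lemma odd_card_above_vfig (F P : {fset nat}) e t : v \notin F ->
  pair_decomp m (v |` F) P e -> t \in interval_m m -> t \notin F ->
  odd (card_above F t) = (e == m) (+) (t \in P) (+) (t < v).
Proof.
move=> vF dec tm tF; have [eH _] := pair_decomp_sub dec.
have te : t != e.
  apply: contraNneq tF => te; move: eH; rewrite -te !inE => /orP [/eqP tv|//].
  by case: dec => [[] et _]; exfalso; lia.
by rewrite -(odd_card_above_facet dec tm te) odd_card_above_fsetU1 // addbC addKb.
Qed.

Lemma upper_facet_parity F : upper_facet m d v F ->
  exists q, forall t, t \in interval_m m -> t \notin F ->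
    odd (card_above F t) = q (+) (t < v).
Proof.
move=> [vfF [P [e [dec [_ Pv]]]]]; have vF := vfig_facet_notin vfF.
exists (e == m) => t tm tF; rewrite (odd_card_above_vfig vF dec tm tF).
suff -> : (t \in P) = false by rewrite addbF.
apply: contraNF tF => tP; have [_ /fsubsetP PH] := pair_decomp_sub dec.
move: (PH t tP); rewrite !inE => /orP [/eqP tv|//].
case: dec => _ [_ [Pdisj _]]; move: (Pdisj _ _ Pv tP).
by rewrite prednK ?tv ?eqxx //; lia.
Qed.

Lemma lower_facet_parity F : lower_facet m d v F ->
  exists q, forall t, t \in interval_m m -> t \notin F ->
    odd (card_above F t) = q (+) (t <= v).
Proof.
move=> [vfF [P [e [dec vP]]]]; have vF := vfig_facet_notin vfF.
exists (e == m) => t tm tF; rewrite (odd_card_above_vfig vF dec tm tF) -addbA.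
have -> : (t \in P) = (t == v).
  apply/idP/eqP => [tP | ->] //; have [_ /fsubsetP PH] := pair_decomp_sub dec.
  by move: (PH t tP); rewrite !inE (negPf tF) orbF => /eqP.
by congr (_ (+) _); case: ltngtP.
Qed.

End VertexFigure.

Theorem lemma4p9 (m d v : nat) (G F F' : {fset nat}) :
  1 <= d -> 2 <= v -> v <= m.-1 ->
  G `<=` interval_m m `\ v -> #|` G | = (2 * d).-1 ->
  upper_facet m d v F -> lower_facet m d v F' ->
  G = F `&` F' ->
  is_facet_cyc (interval_m m `\ v) (2 * d).-1 G.
Proof.
move=> d1 v2 vm GV cG upF lowF GE.
have v_inner : 1 < v < m by lia.
have [q Fpar] := upper_facet_parity v_inner upF.
have [q' F'par] := lower_facet_parity v_inner lowF.
have [GF GF'] : G `<=` F /\ G `<=` F' by rewrite GE fsubsetIl fsubsetIr.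
have [a aG FE] := vfig_facet_fsetU1 d1 upF.1 GF cG.
have [b bG F'E] := vfig_facet_fsetU1 d1 lowF.1 GF' cG.
subst F F'.
have ab : a != b by apply: contraNneq aG => ab; rewrite GE !inE ab eqxx.
have bI : b \in interval_m m.
  by move/fsubsetP: lowF.1.1 => /(_ b (fset1U1 _ _)); rewrite in_fsetD1 => /andP[].
have vI : v \in interval_m m by rewrite mem_interval_m; lia.
have gale := gale_parity_meet ab aG bG (vfig_facet_notin upF.1)
  (vfig_facet_notin lowF.1) bI vI Fpar F'par.
split=> //; split=> //.
case: (odd (card_above G b)) gale => gale; [right | left] => w;
  by rewrite in_fsetD1 => /andP [wv wm] wG; rewrite -/(card_above G w) gale.
Qed.
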